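(* Let $\mathcal{H}\cong\mathbb{C}^n$, let $\gamma>0$, and let $\mathcal{F}:\mathcal{D}(\mathcal{H})\to\mathcal{B}(\mathcal{H})$ be continuous and satisfy $$0\le\langle x,\mathcal{F}(x)-\mathcal{F}(y)\rangle\le\gamma\, S(x\,\|\,y)\qquad\text{for all }x,y\in\operatorname{relint}\mathcal{D}(\mathcal{H}).$$ Consider the quantum Blahut-Arimoto iterates, started from $x^0\in\operatorname{relint}\mathcal{D}(\mathcal{H})$, $$y^{k+1}=x^k,\qquad x^{k+1}=\frac{\exp\big(\log(y^{k+1})-\mathcal{F}(y^{k+1})/\gamma\big)}{\operatorname{tr}\big[\exp\big(\log(y^{k+1})-\mathcal{F}(y^{k+1})/\gamma\big)\big]},$$ and let $f(x)=\langle x,\mathcal{F}(x)\rangle$ on $\mathcal{D}(\mathcal{H})$. Then these iterates are exactly the mirror descent iterates for minimizing $f$ over $\mathcal{C}=\mathcal{D}(\mathcal{H})$ with kernel $\varphi=-S$ and constant step size $t_k=1/\gamma$, and moreover: (a) $f(x)=\langle x,\nabla f(x)\rangle$ and $\nabla f(x)=\mathcal{F}(x)$ for all $x\in\operatorname{relint}\mathcal{D}(\mathcal{H})$; (b) $f$ is $\gamma$-smooth relative to $-S$ on $\mathcal{D}(\mathcal{H})$. If additionally there is $a>0$ with $\langle x,\mathcal{F}(x)-\mathcal{F}(y)\rangle\ge a\,S(x\,\|\,y)$ for all $x,y\in\operatorname{relint}\mathcal{D}(\mathcal{H})$, then $f$ is also $a$-strongly convex relative to $-S$ on $\mathcal{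D}(\mathcal{H})$.
   Context: $\mathcal{B}(\mathcal{H})$ is the real vector space of self-adjoint operators on $\mathcal{H}$ with inner product $\langle X,Y\rangle=\operatorname{tr}[XY]$; $\mathcal{D}(\mathcal{H})=\{\rho\succeq0:\operatorname{tr}\rho=1\}$ is the set of density matrices, whose relative interior consists of the positive definite density matrices. $S(\rho)=-\operatorname{tr}[\rho\log\rho]$ is the von Neumann entropy and $S(\rho\,\|\,\sigma)=\operatorname{tr}[\rho(\log\rho-\log\sigma)]$ the quantum relative entropy. For a Legendre kernel $\varphi$ (proper, lsc, strictly convex, essentially smooth) with Bregman divergence $D_\varphi(x\,\|\,y)=\varphi(x)-\varphi(y)-\langle\nabla\varphi(y),x-y\rangle$, the mirror descent iterates for minimizing a differentiable $f$ over a convex set $\mathcal{C}\subseteq\operatorname{dom}\varphi$ with step sizes $t_k>0$ are $x^{k+1}=\arg\min_{x\in\mathcal{C}}\{\langle\nabla f(x^k),x\rangle+\frac1{t_k}D_\varphi(x\,\|\,x^k)\}$. For $\varphi=-S$ on positive semidefinite matrices, $D_\varphi(\rho\,\|\,\sigma)=S(\rho\,\|\,\sigma)-\operatorname{tr}[\rho-\sigma]$. $f$ is $L$-smooth (resp. $\mu$-strongly convex) relative to $\varphi$ on $\mathcal{C}$ if $L\varphi-f$ (resp. $f-\mu\varphi$) is convex on $\operatorname{relint}\mathcal{C}$. *)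

From HB Require Import structures.
From mathcomp Require Import all_boot all_order all_algebra.
From mathcomp Require Import complex sesquilinear spectral.
From mathcomp Require Import boolp reals sequences exp.
Set Implicit Arguments. Unset Strict Implicit. Unset Printing Implicit Defensive.
Import Order.TTheory GRing.Theory Num.Theory.
Local Open Scope ring_scope.
Local Open Scope complex_scope.
Local Open Scope sesquilinear_scope.

Section QBA.
Variables (R : realType) (n : nat).
Local Notation C := R[i].
Local Notation M := 'M[C]_n.

(* B(H): self-adjoint matrices are those in the library's [hermsymmx];
   conjugate transpose A^* is the library's [A ^t*] (sesquilinear_scope). *)
Definition adjmx (A : M) : M := A ^t*.

Definition qform (A : M) (v : 'cV[C]_n) : C := (v ^t* *m A *m v) 0 0.

Definition psdmx (A : M) : Prop := A \is hermsymmx /\ forall v, 0 <= qform A v.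
Definition pdmx (A : M) : Prop := A \is hermsymmx /\ forall v, v != 0 -> 0 < qform A v.

Definition density (A : M) : Prop := psdmx A /\ \tr A = 1.
Definition relint_density (A : M) : Prop := pdmx A /\ \tr A = 1.

Definition ipmx (X Y : M) : R := complex.Re (\tr (X *m Y)).
Definition mxnorm (A : M) : R := Num.sqrt (complex.Re (\tr (A *m adjmx A))).

(* functional calculus f(A) for self-adjoint A, via the library spectral
   decomposition A = P^-1 diag(sp) P with P = spectralmx A unitary
   (the eigenvalues sp are real when A \is hermsymmx) *)
Definition mxfun (f : R -> R) (A : M) : M :=
  let P := spectralmx A in
  invmx P *m diag_mx (\row_i ((f (complex.Re (spectral_diag A 0 i)))%:C)) *m P.

Definition expm (A : M) : M := mxfun (@expR R) A.
Definition logm (A : M) : M := mxfun (@ln R) A.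

(* phi(rho) = -S(rho) = tr[rho log rho], with the convention 0 log 0 = 0 *)
Definition neg_entropy (rho : M) : R := complex.Re (\tr (mxfun (fun t => t * @ln R t) rho)).
Definition vN_entropy (rho : M) : R := - neg_entropy rho.

(* quantum relative entropy S(rho||sigma) = tr[rho log rho] - tr[rho log sigma]
   (used for positive definite sigma) *)
Definition relent (rho sigma : M) : R := neg_entropy rho - complex.Re (\tr (rho *m logm sigma)).

Definition bregman_negS (rho sigma : M) : R := relent rho sigma - complex.Re (\tr (rho - sigma)).

Definition continuous_on_density (F : M -> M) : Prop :=
  forall x, density x -> forall e : R, 0 < e -> exists2 d : R, 0 < d &
    forall y, density y -> mxnorm (y - x) < d -> mxnorm (F y - F x) < e.

Definition is_gradient_at (f : M -> R) (x G : M) : Prop :=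
  forall e : R, 0 < e -> exists2 d : R, 0 < d &
    forall y, density y -> mxnorm (y - x) < d ->
      `|f y - f x - ipmx G (y - x)| <= e * mxnorm (y - x).

Definition convex_on_relint (g : M -> R) : Prop :=
  forall x y (t : R), relint_density x -> relint_density y -> 0 <= t <= 1 ->
    g (t%:C *: x + (1 - t)%:C *: y) <= t * g x + (1 - t) * g y.

Definition rel_smooth (L : R) (f : M -> R) : Prop :=
  convex_on_relint (fun x => L * neg_entropy x - f x).
Definition rel_strongly_convex (mu : R) (f : M -> R) : Prop :=
  convex_on_relint (fun x => f x - mu * neg_entropy x).

Definition is_argmin_density (obj : M -> R) (z : M) : Prop :=
  density z /\ (forall w, density w -> obj z <= obj w) /\
  (forall w, density w -> obj w <= obj z -> w = z).

Definition mirror_descent_step (f : M -> R) (t : R) (xk xk1 : M) : Prop :=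
  forall G, is_gradient_at f xk G ->
    is_argmin_density (fun z => ipmx G z + t^-1 * bregman_negS z xk) xk1.

Definition qba_step (F : M -> M) (gamma : R) (y : M) : M :=
  let E := expm (logm y - (gamma^-1)%:C *: F y) in (\tr E)^-1 *: E.
Definition qba_iter (F : M -> M) (gamma : R) (x0 : M) (k : nat) : M :=
  iter k (qba_step F gamma) x0.

Definition fobj (F : M -> M) (x : M) : R := ipmx x (F x).

End QBA.

From HB Require Import structures.
From mathcomp Require Import all_boot all_order all_algebra.
From mathcomp Require Import complex sesquilinear spectral.
From mathcomp Require Import boolp reals sequences exp.
From mathcomp Require Import ring lra.
Import Order.TTheory GRing.Theory Num.Theory Normc.
Set Implicit Arguments. Unset Strict Implicit. Unset Printing Implicit Defensive.
Local Open Scope ring_scope.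
Local Open Scope complex_scope.
Local Open Scope sesquilinear_scope.

(* Everything reduces to scalars in eigenbases.  If x = U^* diag(p) U and
   y = V^* diag(q) V, the moduli |(U V^* )_ij|^2 form a doubly stochastic matrix and
   S(x||y) = sum_ij |(U V^* )_ij|^2 (p_i ln p_i - p_i ln q_j - p_i + q_j), which gives
   Klein's inequality: S(x||y) >= 0, with equality only for x = y.

   The QBA update z is the Gibbs state of log y - F(y)/gamma, so
   log z = log y - F(y)/gamma - c for a scalar c.  Hence on D(H) the mirror descent
   objective <grad f(y), w> + gamma D(w, y) is gamma S(w||z) plus a constant, and
   Klein's inequality makes z its unique minimizer.

   The gradient of f is F because f(w) - f(y) - <F y, w - y> = <w, F w - F y> lies
   between 0 and <w - y, F w - F y> = o(|w - y|).  Together with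
   phi(w) - phi(y) - <log y, w - y> = S(w||y), the same identity turns the bounds on
   <w, F w - F y> into gradient inequalities for gamma phi - f and f - a phi. *)

Section ComplexModulus.
Variable R : realType.
Local Notation C := R[i].
Local Notation Re := (@complex.Re R).
Local Notation Im := (@complex.Im R).
Implicit Types (a b z : C) (x : R).

Definition normc2 z : R := Re z ^+ 2 + Im z ^+ 2.

Lemma normc2_ge0 z : 0 <= normc2 z.
Proof. by rewrite addr_ge0 ?sqr_ge0. Qed.

Lemma normc2_eq0 z : (normc2 z == 0) = (z == 0).
Proof. by case: z => a b; rewrite /normc2 paddr_eq0 ?sqr_ge0 // !sqrf_eq0 eq_complex. Qed.

Lemma mulcJ_normc2 z : z * Num.conj z = (normc2 z)%:C.
Proof.
by case: z => a b; apply/eqP; rewrite eq_complex /normc2 /=; apply/andP; split; apply/eqP; ring.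
Qed.

Lemma mulJc_normc2 z : Num.conj z * z = (normc2 z)%:C.
Proof. by rewrite mulrC mulcJ_normc2. Qed.

Lemma normc2M a b : normc2 (a * b) = normc2 a * normc2 b.
Proof. by case: a => a1 a2; case: b => b1 b2; rewrite /normc2 /=; ring. Qed.

Lemma ltr0c x : (0 < x%:C) = (0 < x).
Proof. exact: ltcR. Qed.

Lemma normc2_real x : normc2 x%:C = x ^+ 2.
Proof. by rewrite /normc2 /= expr0n addr0. Qed.

Lemma normc_sqrt z : normc z = Num.sqrt (normc2 z).
Proof. by case: z. Qed.

Lemma normc_sqr z : normc z ^+ 2 = normc2 z.
Proof. by rewrite normc_sqrt sqr_sqrtr ?normc2_ge0. Qed.

Lemma normc_conj z : normc (Num.conj z) = normc z.
Proof. by case: z => a b; rewrite /= sqrrN. Qed.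

Lemma ler_Re_normc z : `|Re z| <= normc z.
Proof. by case: z => a b; rewrite /= -sqrtr_sqr ler_sqrt ?lerDl ?sqr_ge0 // addr_ge0 ?sqr_ge0. Qed.

Lemma normc_ge0 z : 0 <= normc z.
Proof. by case: z => a b; exact: sqrtr_ge0. Qed.

Lemma normcM_le_mean a b : normc a * normc b <= (normc2 a + normc2 b) / 2.
Proof. by rewrite -!normc_sqr; have := sqr_ge0 (normc a - normc b); lra. Qed.

End ComplexModulus.

Section UnitaryDiagonalization.
Variables (R : realType) (n : nat).
Local Notation C := R[i].
Local Notation Re := (@complex.Re R).
Local Notation M := 'M[C]_n.
Implicit Types (A B U V W : M) (c d : 'I_n -> R).

Definition realdiag c : M := diag_mx (\row_i (c i)%:C).
Definition udiag U c : M := U^t* *m realdiag c *m U.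
Definition eigval A i : R := Re (spectral_diag A 0 i).

Lemma unitarymx_mulCV U : U \is unitarymx -> U^t* *m U = 1%:M.
Proof. by move=> uU; rewrite -[U^t*]mul1mx mulmxKtV //. Qed.

Lemma trmxC_mul m p q (A : 'M[C]_(m, p)) (B : 'M[C]_(p, q)) : (A *m B)^t* = B^t* *m A^t*.
Proof. by rewrite trmx_mul map_mxM. Qed.

Lemma realdiag_trmxC c : (realdiag c)^t* = realdiag c.
Proof.
apply/matrixP => i j; rewrite !mxE eq_sym.
case: (i =P j) => [->|_]; rewrite ?mulr1n ?mulr0n ?rmorph0 //.
exact: conjc_real.
Qed.

Lemma realdiagM c d : realdiag c *m realdiag d = realdiag (fun i => c i * d i).
Proof. by rewrite mulmx_diag; congr diag_mx; apply/rowP => i; rewrite !mxE rmorphM. Qed.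

Lemma realdiagD c d : realdiag c + realdiag d = realdiag (fun i => c i + d i).
Proof.
apply/matrixP => i j; rewrite !mxE.
by case: eqP => _; rewrite ?mulr1n ?mulr0n ?addr0 ?rmorphD.
Qed.

Lemma realdiagZ (a : R) c : a%:C *: realdiag c = realdiag (fun i => a * c i).
Proof.
apply/matrixP => i j; rewrite !mxE.
by case: eqP => _; rewrite ?mulr1n ?mulr0n ?mulr0 ?rmorphM.
Qed.

Lemma realdiag1 : realdiag (fun _ => 1) = 1%:M.
Proof. by rewrite -diag_const_mx; congr diag_mx; apply/rowP => i; rewrite !mxE. Qed.

Lemma mxtrace_realdiag c : \tr (realdiag c) = (\sum_i c i)%:C.
Proof. by rewrite mxtrace_diag rmorph_sum; apply: eq_bigr => i _; rewrite mxE. Qed.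

Lemma udiag_trmxC U c : (udiag U c)^t* = udiag U c.
Proof. by rewrite !trmxC_mul trmxCK realdiag_trmxC mulmxA. Qed.

Lemma udiag_herm U c : udiag U c \is hermsymmx.
Proof. by apply/is_hermitianmxP; rewrite expr0 scale1r udiag_trmxC. Qed.

Lemma udiagD U c d : udiag U c + udiag U d = udiag U (fun i => c i + d i).
Proof. by rewrite -mulmxDl -mulmxDr realdiagD. Qed.

Lemma udiagZ U (a : R) c : a%:C *: udiag U c = udiag U (fun i => a * c i).
Proof. by rewrite scalemxAl scalemxAr realdiagZ. Qed.

Lemma udiagB U c d : udiag U c - udiag U d = udiag U (fun i => c i - d i).
Proof.
have -> : - udiag U d = (-1 : R)%:C *: udiag U d by rewrite rmorphN1 scaleN1r.
rewrite udiagZ udiagD.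
by congr udiag; apply: funext => i; rewrite mulN1r.
Qed.

Section Unitary.
Variable U : M.
Hypothesis uU : U \is unitarymx.

Lemma udiagM c d : udiag U c *m udiag U d = udiag U (fun i => c i * d i).
Proof.
rewrite /udiag !mulmxA -(mulmxA (U^t* *m realdiag c) U (U^t*)) (unitarymxP uU) mulmx1.
by rewrite -(mulmxA (U^t*) (realdiag c) (realdiag d)) realdiagM.
Qed.

Lemma udiag1 : udiag U (fun _ => 1) = 1%:M.
Proof. by rewrite /udiag realdiag1 mulmx1 unitarymx_mulCV. Qed.

Lemma mxtrace_udiag c : \tr (udiag U c) = (\sum_i c i)%:C.
Proof. by rewrite mxtrace_mulC mulmxA (unitarymxP uU) mul1mx mxtrace_realdiag. Qed.

End Unitary.

Lemma spectral_udiag A : A \is hermsymmx -> A = udiag (spectralmx A) (eigval A).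
Proof.
move=> hA; have /mxOverP realA := hermitian_spectral_diag_real hA.
have /orthomx_spectralP {1}-> := hermitian_normalmx hA.
rewrite (invmx_unitary (spectral_unitarymx A)) /udiag /realdiag.
suff -> : spectral_diag A = \row_i (eigval A i)%:C by [].
by apply/rowP => i; rewrite mxE RRe_real ?realA.
Qed.

Lemma mxfunE f A : mxfun f A = udiag (spectralmx A) (fun i => f (eigval A i)).
Proof. by rewrite /mxfun invmx_unitary ?spectral_unitarymx. Qed.

Lemma realdiag_intertwineP W c d :
  realdiag c *m W = W *m realdiag d <-> forall i j, W i j != 0 -> c i = d j.
Proof.
rewrite /realdiag; split => [/matrixP cWd i j Wij|cd].
  move: (cWd i j); rewrite mul_diag_mx mul_mx_diag !mxE => e.
  by apply: complexI; apply: (mulIf Wij); rewrite e mulrC.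
apply/matrixP => i j; rewrite mul_diag_mx mul_mx_diag !mxE.
by have [->|/cd ->] := eqVneq (W i j) 0; rewrite ?mulr0 ?mul0r // mulrC.
Qed.

Lemma udiag_eqP U V c d : U \is unitarymx -> V \is unitarymx ->
  udiag U c = udiag V d <-> forall i j, (U *m V^t*) i j != 0 -> c i = d j.
Proof.
move=> uU uV; rewrite -realdiag_intertwineP; split => [e|cWd].
  have := congr1 (fun X => U *m X *m V^t*) e; rewrite /udiag /=.
  rewrite !mulmxA (unitarymxP uU) mul1mx => ->.
  by rewrite -(mulmxA (U *m V^t* *m realdiag d)) (unitarymxP uV) mulmx1 -(mulmxA U).
rewrite /udiag -{2}[U]mulmx1 -(unitarymx_mulCV uV) !mulmxA.
have cWd' : realdiag c *m U *m V^t* = U *m V^t* *m realdiag d by rewrite -mulmxA.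
rewrite -(mulmxA (U^t*) (realdiag c) U) -(mulmxA (U^t*) (realdiag c *m U) (V^t*)) cWd'.
by rewrite !mulmxA (unitarymx_mulCV uU) mul1mx.
Qed.

Lemma udiag_eq_map f U V c d : U \is unitarymx -> V \is unitarymx ->
  udiag U c = udiag V d -> udiag U (fun i => f (c i)) = udiag V (fun i => f (d i)).
Proof.
move=> uU uV /(udiag_eqP _ _ uU uV) cd.
by apply/(udiag_eqP _ _ uU uV) => i j /cd ->.
Qed.

Lemma mxfun_udiag f A U c : U \is unitarymx -> A = udiag U c ->
  mxfun f A = udiag U (fun i => f (c i)).
Proof.
move=> uU eA; rewrite mxfunE; apply: udiag_eq_map (spectral_unitarymx A) uU _.
by rewrite -spectral_udiag // eA udiag_herm.
Qed.

End UnitaryDiagonalization.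

Section TraceQuadraticForm.
Variables (R : realType) (n : nat).
Local Notation C := R[i].
Local Notation M := 'M[C]_n.
Implicit Types (U V W : M) (c d : 'I_n -> R) (v : 'cV[C]_n).

Definition cvnorm2 v : R := \sum_i normc2 (v i 0).

Lemma mxtrace_realdiag_conj W c d :
  \tr (realdiag c *m W *m realdiag d *m W^t*) =
  (\sum_i \sum_j c i * d j * normc2 (W i j))%:C.
Proof.
rewrite /realdiag mul_diag_mx mul_mx_diag /mxtrace rmorph_sum; apply: eq_bigr => i _.
rewrite !mxE rmorph_sum; apply: eq_bigr => j _; rewrite !mxE !rmorphM /= -mulcJ_normc2; ring.
Qed.

Lemma unitarymx_row_normc2 W i : W \is unitarymx -> \sum_j normc2 (W i j) = 1.
Proof.
move=> /unitarymxP/matrixP/(_ i i); rewrite !mxE eqxx mulr1n.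
under eq_bigr => j _ do rewrite !mxE mulcJ_normc2.
by rewrite -rmorph_sum => -[].
Qed.

Lemma unitarymx_col_normc2 W j : W \is unitarymx -> \sum_i normc2 (W i j) = 1.
Proof.
move=> /unitarymx_mulCV/matrixP/(_ j j); rewrite !mxE eqxx mulr1n.
under eq_bigr => i _ do rewrite !mxE mulJc_normc2.
by rewrite -rmorph_sum => -[].
Qed.

Lemma mxtrace_udiagM U V c d : U \is unitarymx -> V \is unitarymx ->
  \tr (udiag U c *m udiag V d) =
  (\sum_i \sum_j c i * d j * normc2 ((U *m V^t*) i j))%:C.
Proof.
move=> uU uV; rewrite -(mxtrace_realdiag_conj (U *m V^t*)).
have -> : \tr (udiag U c *m udiag V d) =
    \tr ((realdiag c *m U *m V^t* *m realdiag d *m V) *m U^t*).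
  by rewrite (mxtrace_mulC _ (U^t*)) /udiag !mulmxA.
by rewrite trmxC_mul trmxCK !mulmxA.
Qed.

Lemma cvnorm2E v : (v^t* *m v) 0 0 = (cvnorm2 v)%:C.
Proof. by rewrite !mxE rmorph_sum; apply: eq_bigr => i _; rewrite !mxE mulJc_normc2. Qed.

Lemma cvnorm2_unitary U v : U \is unitarymx -> cvnorm2 (U *m v) = cvnorm2 v.
Proof.
move=> uU; apply: complexI; rewrite -!cvnorm2E trmxC_mul mulmxA.
by rewrite -(mulmxA (v^t*)) unitarymx_mulCV // mulmx1.
Qed.

Lemma qform_udiag U c v : qform (udiag U c) v = (\sum_i c i * normc2 ((U *m v) i 0))%:C.
Proof.
rewrite /qform /udiag -!mulmxA mulmxA -trmxC_mul mulmxA.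
rewrite /realdiag mul_mx_diag !mxE rmorph_sum; apply: eq_bigr => i _.
by rewrite !mxE mulrAC mulJc_normc2 mulrC -rmorphM.
Qed.

Lemma unitarymx_mul_eq0 U v : U \is unitarymx -> (U *m v == 0) = (v == 0).
Proof.
move=> uU; apply/eqP/eqP => [Uv0|->]; last by rewrite mulmx0.
by rewrite -[v]mul1mx -(unitarymx_mulCV uU) -mulmxA Uv0 mulmx0.
Qed.

Lemma pdmx_udiag U c : U \is unitarymx -> (forall i, 0 < c i) -> pdmx (udiag U c).
Proof.
move=> uU c_gt0; split => [|v v0]; first exact: udiag_herm.
rewrite qform_udiag ltr0c.
have /eqP/matrixP/existsNP[i /existsNP[j]] : U *m v != 0 by rewrite unitarymx_mul_eq0.
rewrite [j]ord1 => /eqP; rewrite [X in _ != X]mxE => Uvi.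
rewrite (bigD1 i) //= ltr_pwDl ?sumr_ge0 // => [|k _].
  by rewrite mulr_gt0 // lt_def normc2_ge0 normc2_eq0 Uvi.
exact: mulr_ge0 (ltW (c_gt0 k)) (normc2_ge0 _).
Qed.

Section Eigenvector.
Variables (U : M) (i : 'I_n).
Hypothesis uU : U \is unitarymx.
Let e := U^t* *m (delta_mx i 0 : 'cV[C]_n).

Lemma cvnorm2_eigvec : cvnorm2 e = 1.
Proof.
rewrite -(cvnorm2_unitary _ uU) /e mulmxA (unitarymxP uU) mul1mx /cvnorm2.
rewrite (bigD1 i) // big1 => [|k ki]; last by rewrite mxE (negbTE ki) normc2_real expr0n.
by rewrite mxE !eqxx /= addr0 /normc2 /= expr1n expr0n addr0.
Qed.

Lemma qform_udiag_eigvec c : qform (udiag U c) e = (c i)%:C.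
Proof.
rewrite qform_udiag /e mulmxA (unitarymxP uU) mul1mx.
rewrite (bigD1 i) // big1 => [|k ki]; last by rewrite mxE (negbTE ki) normc2_real expr0n mulr0.
by rewrite mxE !eqxx /= addr0 /normc2 /= expr1n expr0n addr0 mulr1.
Qed.

Lemma eigvec_neq0 : e != 0.
Proof.
rewrite -(unitarymx_mul_eq0 _ uU) /e mulmxA (unitarymxP uU) mul1mx.
by apply/eqP => /matrixP/(_ i 0); rewrite !mxE !eqxx; apply/eqP; rewrite oner_eq0.
Qed.

End Eigenvector.

Lemma udiag_pdmx_gt0 U c : U \is unitarymx -> pdmx (udiag U c) -> forall i, 0 < c i.
Proof.
by move=> uU [_ pd] i; have := pd _ (eigvec_neq0 i uU); rewrite qform_udiag_eigvec // ltr0c.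
Qed.

Lemma udiag_psdmx_ge0 U c : U \is unitarymx -> psdmx (udiag U c) -> forall i, 0 <= c i.
Proof.
by move=> uU [_ psd] i; have := psd (U^t* *m delta_mx i 0); rewrite qform_udiag_eigvec // ler0c.
Qed.

End TraceQuadraticForm.

Section BregmanXlnx.
Variable R : realType.
Implicit Types p q r : R.

Definition bregman_xlnx p q : R := p * ln p - p * ln q - p + q.

Lemma ln_le_subr1 r : 0 < r -> ln r <= r - 1.
Proof. by move=> r0; have := expR_ge1Dx (ln r); rewrite lnK //; lra. Qed.

Lemma ln_lt_subr1 r : 0 < r -> r != 1 -> ln r < r - 1.
Proof.
move=> r0 r1; have : ln r != 0 by rewrite ln_eq0.
by move/expR_gt1Dx; rewrite lnK //; lra.
Qed.

Lemma bregman_xlnxE p q : 0 < p -> 0 < q ->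
  bregman_xlnx p q = p * (q / p - 1 - ln (q / p)).
Proof. by move=> p0 q0; rewrite ln_div ?posrE // /bregman_xlnx; field; rewrite gt_eqF. Qed.

Lemma bregman_xlnx_ge0 p q : 0 <= p -> 0 < q -> 0 <= bregman_xlnx p q.
Proof.
rewrite le_eqVlt => /orP[/eqP <- q0|p0 q0]; first by rewrite /bregman_xlnx !mul0r; lra.
rewrite bregman_xlnxE // mulr_ge0 ?(ltW p0) // subr_ge0.
exact/ln_le_subr1/divr_gt0.
Qed.

Lemma bregman_xlnx_eq0 p q : 0 <= p -> 0 < q -> bregman_xlnx p q = 0 -> p = q.
Proof.
rewrite le_eqVlt => /orP[/eqP <- q0|p0 q0]; first by rewrite /bregman_xlnx !mul0r; lra.
have [qp1|qp1] := eqVneq (q / p) 1; first by rewrite -[q](divfK (lt0r_neq0 p0)) qp1 mul1r.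
have := ln_lt_subr1 (divr_gt0 q0 p0) qp1.
by rewrite bregman_xlnxE // => lt /eqP; rewrite mulf_eq0 gt_eqF //=; lra.
Qed.

End BregmanXlnx.

Section KleinInequality.
Variables (R : realType) (n : nat).
Local Notation C := R[i].
Local Notation M := 'M[C]_n.
Implicit Types (A B : M).

Lemma density_spectral A : density A ->
  [/\ spectralmx A \is unitarymx, A = udiag (spectralmx A) (eigval A),
      forall i, 0 <= eigval A i & \sum_i eigval A i = 1].
Proof.
move=> [[hA psdA] trA]; have uU := spectral_unitarymx A; have eA := spectral_udiag hA.
split => //; first by apply: udiag_psdmx_ge0 uU _; rewrite -eA.
by move: trA; rewrite {1}eA mxtrace_udiag // => -[].
Qed.

Lemma relint_density_spectral A : relint_density A ->
  [/\ spectralmx A \is unitarymx, A = udiag (spectralmx A) (eigval A),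
      forall i, 0 < eigval A i & \sum_i eigval A i = 1].
Proof.
move=> [[hA pdA] trA]; have uU := spectral_unitarymx A; have eA := spectral_udiag hA.
split => //; first by apply: udiag_pdmx_gt0 uU _; rewrite -eA.
by move: trA; rewrite {1}eA mxtrace_udiag // => -[].
Qed.

Lemma relent_udiag A B U V p q : U \is unitarymx -> V \is unitarymx ->
  A = udiag U p -> B = udiag V q ->
  relent A B = \sum_i p i * ln (p i) -
               \sum_i \sum_j p i * ln (q j) * normc2 ((U *m V^t*) i j).
Proof.
move=> uU uV eA eB; rewrite /relent /neg_entropy /logm.
rewrite (mxfun_udiag _ uU eA) (mxfun_udiag _ uV eB) (mxtrace_udiag uU).
by rewrite [X in X *m _]eA (mxtrace_udiagM _ _ uU uV).
Qed.

Lemma relent_bregman_xlnx A B : density A -> relint_density B ->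
  relent A B = \sum_i \sum_j normc2 ((spectralmx A *m (spectralmx B)^t*) i j) *
                            bregman_xlnx (eigval A i) (eigval B j).
Proof.
move=> /density_spectral [uU eA _ p1] /relint_density_spectral [uV eB _ q1].
set W := _ *m _; have uW : W \is unitarymx by rewrite mul_unitarymx ?trmxC_unitary.
set p := eigval A in eA p1 *; set q := eigval B in eB q1 *.
have inner i : \sum_j normc2 (W i j) * bregman_xlnx (p i) (q j) =
    p i * ln (p i) - \sum_j p i * ln (q j) * normc2 (W i j) - p i +
    \sum_j normc2 (W i j) * q j.
  transitivity (\sum_j (normc2 (W i j) * (p i * ln (p i)) - p i * ln (q j) * normc2 (W i j)
      - normc2 (W i j) * p i + normc2 (W i j) * q j)).
    by apply: eq_bigr => j _; rewrite /bregman_xlnx; ring.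
  by rewrite big_split /= !sumrB -!mulr_suml unitarymx_row_normc2 // !mul1r.
have col : \sum_i \sum_j normc2 (W i j) * q j = 1.
  rewrite exchange_big /= -q1; apply: eq_bigr => j _.
  by rewrite -mulr_suml unitarymx_col_normc2 // mul1r.
rewrite (relent_udiag uU uV eA eB) (eq_bigr _ (fun i _ => inner i)).
by rewrite !big_split /= !sumrN p1 col -/W; ring.
Qed.

Lemma relent_ge0 A B : density A -> relint_density B -> 0 <= relent A B.
Proof.
move=> dA rB; have [_ _ p0 _] := density_spectral dA.
have [_ _ q0 _] := relint_density_spectral rB.
rewrite relent_bregman_xlnx // !sumr_ge0 // => i _; rewrite sumr_ge0 // => j _.
by rewrite mulr_ge0 ?normc2_ge0 ?bregman_xlnx_ge0.
Qed.

Lemma relent_le0_eq A B : density A -> relint_density B -> relent A B <= 0 -> A = B.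
Proof.
move=> dA rB; have [uU eA p0 _] := density_spectral dA.
have [uV eB q0 _] := relint_density_spectral rB.
have terms_ge0 i j : 0 <= normc2 ((spectralmx A *m (spectralmx B)^t*) i j) *
    bregman_xlnx (eigval A i) (eigval B j) by rewrite mulr_ge0 ?normc2_ge0 ?bregman_xlnx_ge0.
rewrite relent_bregman_xlnx // => le0.
have /eqP : \sum_i \sum_j normc2 ((spectralmx A *m (spectralmx B)^t*) i j) *
    bregman_xlnx (eigval A i) (eigval B j) = 0.
  by apply/le_anti; rewrite le0 sumr_ge0 // => i _; rewrite sumr_ge0.
rewrite psumr_eq0 => [/allP sum0|i _]; last by rewrite sumr_ge0.
rewrite eA eB; apply/(udiag_eqP _ _ uU uV) => i j Wij.
move: (sum0 i (mem_index_enum i)); rewrite /= psumr_eq0 // => /allP/(_ j (mem_index_enum j)).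
by rewrite /= mulf_eq0 normc2_eq0 (negbTE Wij) => /eqP; apply: bregman_xlnx_eq0.
Qed.

End KleinInequality.

Section InnerProduct.
Variables (R : realType) (n : nat).
Local Notation C := R[i].
Local Notation Re := (@complex.Re R).
Local Notation M := 'M[C]_n.
Implicit Types (A B X Y Z : M) (a b t : R).

Lemma ipmxC X Y : ipmx X Y = ipmx Y X.
Proof. by rewrite /ipmx mxtrace_mulC. Qed.

Lemma ipmxDr X Y Z : ipmx X (Y + Z) = ipmx X Y + ipmx X Z.
Proof. by rewrite /ipmx mulmxDr mxtraceD raddfD. Qed.

Lemma ipmxNr X Y : ipmx X (- Y) = - ipmx X Y.
Proof. by rewrite /ipmx mulmxN !raddfN. Qed.

Lemma ipmxBr X Y Z : ipmx X (Y - Z) = ipmx X Y - ipmx X Z.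
Proof. by rewrite /ipmx mulmxBr !raddfB. Qed.

Lemma ipmxZr X Y a : ipmx X (a%:C *: Y) = a * ipmx X Y.
Proof. by rewrite /ipmx -scalemxAr mxtraceZ; case: (\tr _) => u v /=; ring. Qed.

Lemma ipmxBl X Y Z : ipmx (Y - Z) X = ipmx Y X - ipmx Z X.
Proof. by rewrite ipmxC ipmxBr !(ipmxC X). Qed.

Lemma ipmxZl X Y a : ipmx (a%:C *: Y) X = a * ipmx Y X.
Proof. by rewrite ipmxC ipmxZr ipmxC. Qed.

Lemma ipmx1r X : ipmx X 1%:M = Re (\tr X).
Proof. by rewrite /ipmx mulmx1. Qed.

Lemma neg_entropyE A : A \is hermsymmx -> neg_entropy A = ipmx A (logm A).
Proof.
move=> hA; have uU := spectral_unitarymx A; have eA := spectral_udiag hA.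
rewrite /neg_entropy /logm /ipmx !(mxfun_udiag _ uU eA).
by rewrite [X in X *m _]eA udiagM.
Qed.

Lemma relentE A B : relent A B = neg_entropy A - ipmx A (logm B).
Proof. by []. Qed.

Lemma relent_xx A : A \is hermsymmx -> relent A A = 0.
Proof. by move=> hA; rewrite /relent neg_entropyE // subrr. Qed.

Lemma hermsymmxP A : reflect (forall i j, A i j = Num.conj (A j i)) (A \is hermsymmx).
Proof.
rewrite is_hermitianmxE expr0 scale1r.
by apply: (iffP eqP) => [{1}-> i j|AJ]; [rewrite !mxE | apply/matrixP => i j; rewrite !mxE].
Qed.

Lemma hermsymmx_comb A B a b : A \is hermsymmx -> B \is hermsymmx ->
  a%:C *: A + b%:C *: B \is hermsymmx.
Proof.
move=> /hermsymmxP hA /hermsymmxP hB; apply/hermsymmxP => i j.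
rewrite !mxE (hA i j) (hB i j); case: (A j i) => ? ?; case: (B j i) => ? ?.
by apply/eqP; rewrite eq_complex /=; apply/andP; split; apply/eqP; ring.
Qed.

Lemma hermsymmx_subZ A B b : A \is hermsymmx -> B \is hermsymmx ->
  A - b%:C *: B \is hermsymmx.
Proof.
by move=> hA hB; have := hermsymmx_comb 1 (- b) hA hB; rewrite scale1r rmorphN scaleNr.
Qed.

Lemma mxfun_herm f A : mxfun f A \is hermsymmx.
Proof. by rewrite mxfunE udiag_herm. Qed.

Lemma qformD A B v : qform (A + B) v = qform A v + qform B v.
Proof. by rewrite /qform mulmxDr mulmxDl mxE. Qed.

Lemma qform_comb A B a b v :
  qform (a%:C *: A + b%:C *: B) v = a%:C * qform A v + b%:C * qform B v.
Proof. by rewrite /qform mulmxDr mulmxDl -!scalemxAr -!scalemxAl !mxE. Qed.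

Section ConvexCombination.
Variable t : R.
Hypothesis t01 : 0 <= t <= 1.

Lemma mxtrace_comb X Y : \tr X = 1 -> \tr Y = 1 -> \tr (t%:C *: X + (1 - t)%:C *: Y) = 1.
Proof. by move=> tX tY; rewrite mxtraceD !mxtraceZ tX tY !mulr1 -rmorphD addrC subrK. Qed.

Lemma density_comb X Y : density X -> density Y -> density (t%:C *: X + (1 - t)%:C *: Y).
Proof.
have /andP[t0 t1] := t01.
move=> [[hX psdX] tX] [[hY psdY] tY]; split; last exact: mxtrace_comb.
split=> [|v]; first exact: hermsymmx_comb.
by rewrite qform_comb addr_ge0 ?mulr_ge0 ?ler0c ?subr_ge0 ?psdX ?psdY.
Qed.

Lemma relint_density_comb X Y : relint_density X -> relint_density Y ->
  relint_density (t%:C *: X + (1 - t)%:C *: Y).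
Proof.
have /andP[t0 t1] := t01.
move=> [[hX pdX] tX] [[hY pdY] tY]; split; last exact: mxtrace_comb.
split=> [|v v0]; first exact: hermsymmx_comb.
rewrite qform_comb; have [->|tn0] := eqVneq t 0.
  by rewrite subr0 rmorph0 rmorph1 mul0r mul1r add0r pdY.
have tqX : 0 < t%:C * qform X v by rewrite mulr_gt0 ?pdX // ltr0c lt_def tn0.
have tqY : 0 <= (1 - t)%:C * qform Y v by rewrite mulr_ge0 ?ler0c ?subr_ge0 // ltW ?pdY.
by rewrite ltr_pwDl.
Qed.

End ConvexCombination.

End InnerProduct.

Section FrobeniusBounds.
Variables (R : realType) (n : nat).
Local Notation C := R[i].
Local Notation Re := (@complex.Re R).
Local Notation M := 'M[C]_n.
Implicit Types (A X Y : M) (v : 'cV[C]_n).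

Lemma mxnormE A : mxnorm A = Num.sqrt (\sum_i \sum_j normc2 (A i j)).
Proof.
rewrite /mxnorm /adjmx /mxtrace raddf_sum; congr Num.sqrt; apply: eq_bigr => i _.
by rewrite !mxE raddf_sum; apply: eq_bigr => j _; rewrite !mxE mulcJ_normc2.
Qed.

Lemma mxnorm_ge0 A : 0 <= mxnorm A.
Proof. by rewrite mxnormE sqrtr_ge0. Qed.

Lemma normc_le_mxnorm A i j : normc (A i j) <= mxnorm A.
Proof.
have sum_ge0 k : 0 <= \sum_l normc2 (A k l) by rewrite sumr_ge0 // => l _; apply: normc2_ge0.
rewrite mxnormE normc_sqrt ler_sqrt ?sumr_ge0 //.
rewrite (bigD1 i) //= (bigD1 j) //= -addrA lerDl addr_ge0 ?sumr_ge0 //.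
by move=> l _; apply: normc2_ge0.
Qed.

Lemma mxnormZ A (a : R) : mxnorm (a%:C *: A) = `|a| * mxnorm A.
Proof.
rewrite !mxnormE -sqrtr_sqr -sqrtrM ?sqr_ge0 // mulr_sumr; congr Num.sqrt.
apply: eq_bigr => i _; rewrite mulr_sumr; apply: eq_bigr => j _.
by rewrite mxE normc2M normc2_real.
Qed.

Lemma ipmx_le_mxnorm X Y : `|ipmx X Y| <= n%:R * n%:R * (mxnorm X * mxnorm Y).
Proof.
have sum_const (c : R) : \sum_(i < n) c = n%:R * c by rewrite sumr_const card_ord mulr_natl.
rewrite /ipmx /mxtrace raddf_sum -mulrA -sum_const.
apply: le_trans (ler_norm_sum _ _ _) _; apply: ler_sum => i _.
rewrite mxE raddf_sum -sum_const; apply: le_trans (ler_norm_sum _ _ _) _.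
apply: ler_sum => j _; apply: le_trans (ler_Re_normc _) _; rewrite normcM.
by apply: ler_pM; rewrite ?normc_ge0 ?normc_le_mxnorm.
Qed.

Lemma qform_le_mxnorm A v : `|Re (qform A v)| <= n%:R * mxnorm A * cvnorm2 v.
Proof.
have sum_pairs : \sum_k \sum_j (normc2 (v j 0) + normc2 (v k 0)) = 2 * n%:R * cvnorm2 v.
  under eq_bigr => k _ do rewrite big_split /= sumr_const card_ord -mulr_natl.
  by rewrite big_split /= sumr_const card_ord -mulr_sumr /cvnorm2 -[_ *+ n]mulr_natl; ring.
rewrite /qform mxE raddf_sum; apply: le_trans (ler_norm_sum _ _ _) _.
apply: le_trans (_ : \sum_k \sum_j mxnorm A / 2 * (normc2 (v j 0) + normc2 (v k 0)) <= _).
  apply: ler_sum => k _; rewrite mxE mulr_suml raddf_sum.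
  apply: le_trans (ler_norm_sum _ _ _) _; apply: ler_sum => j _.
  rewrite !mxE; apply: le_trans (ler_Re_normc _) _; rewrite !normcM normc_conj.
  rewrite [leLHS]mulrAC [leLHS]mulrC [leRHS]mulrAC -[leRHS]mulrA; apply: ler_pM.
  - exact: normc_ge0.
  - by rewrite mulr_ge0 ?normc_ge0.
  - exact: normc_le_mxnorm.
  - exact: normcM_le_mean.
under eq_bigr => k _ do rewrite -mulr_sumr.
by rewrite -mulr_sumr sum_pairs le_eqVlt; apply/orP; left; apply/eqP; field.
Qed.

End FrobeniusBounds.

Section RelativeInterior.
Variables (R : realType) (n : nat).
Local Notation C := R[i].
Local Notation Re := (@complex.Re R).
Local Notation M := 'M[C]_n.
Implicit Types (x y : M).

Lemma relint_densityW x : relint_density x -> density x.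
Proof.
move=> [[hx pdx] trx]; split=> //; split=> // v.
have [->|/pdx/ltW //] := eqVneq v 0.
by rewrite /qform mulmx0 mxE.
Qed.

(* The smallest eigenvalue [m] of [x] bounds [<e, x e>] from below for unit [e], while
   [|<e, (y - x) e>| <= n |y - x|]; so all eigenvalues of [y] stay positive when
   [n |y - x| < m]. *)
Lemma relint_density_open x : relint_density x ->
  exists2 d : R, 0 < d & forall y, density y -> mxnorm (y - x) < d -> relint_density y.
Proof.
move=> /relint_density_spectral [uU ex ex_gt0 _].
set m := \big[Order.min/1]_i eigval x i.
have m_gt0 : 0 < m by rewrite lt_bigmin ?ltr01.
have m_le i : m <= eigval x i by apply: bigmin_le.
have n1_gt0 : 0 < n%:R + 1 :> R by rewrite ltr_wpDl ?ler0n.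
exists (m / (n%:R + 1)) => [|y dy ynear]; first by rewrite divr_gt0.
have [uV ey _ _] := density_spectral dy.
split; last by case: dy.
rewrite ey; apply: (pdmx_udiag uV) => i.
set e := (spectralmx y)^t* *m (delta_mx i 0 : 'cV[C]_n).
have e1 : cvnorm2 e = 1 := cvnorm2_eigvec i uV.
have eig_y : eigval y i = Re (qform x e) + Re (qform (y - x) e).
  by rewrite -raddfD -qformD addrC subrK [X in qform X _]ey /e qform_udiag_eigvec.
have eig_x : m <= Re (qform x e).
  rewrite ex qform_udiag /=.
  apply: le_trans (_ : \sum_k m * normc2 ((spectralmx x *m e) k 0) <= _).
    have Ue1 : \sum_k normc2 ((spectralmx x *m e) k 0) = 1.
      by rewrite -e1 -(cvnorm2_unitary e uU).
    by rewrite -mulr_sumr Ue1 mulr1.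
  by apply: ler_sum => k _; rewrite ler_wpM2r ?normc2_ge0.
have := qform_le_mxnorm (y - x) e; rewrite e1 mulr1 ler_norml => /andP[lo _].
have near : n%:R * mxnorm (y - x) < m.
  have := mxnorm_ge0 (y - x); rewrite ltr_pdivlMr // in ynear; nra.
by rewrite eig_y; lra.
Qed.

End RelativeInterior.

Section Gradient.
Variables (R : realType) (n : nat).
Local Notation C := R[i].
Local Notation M := 'M[C]_n.
Implicit Types (x y z G : M) (f : M -> R).

Lemma fobj_remainder (F : M -> M) x y :
  fobj F y - fobj F x - ipmx (F x) (y - x) = ipmx y (F y - F x).
Proof. by rewrite /fobj !ipmxBr !(ipmxC (F x)); ring. Qed.

Lemma neg_entropy_remainder x y : x \is hermsymmx ->
  neg_entropy y - neg_entropy x - ipmx (logm x) (y - x) = relent y x.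
Proof.
move=> hx; rewrite (neg_entropyE hx) ipmxBr !(ipmxC (logm x)).
by rewrite /relent -/(ipmx y (logm x)); ring.
Qed.

Lemma ler_normB_of_approx (a t p1 p2 e K : R) : 0 < t ->
  `|a - t * p1| <= e * (t * K) -> `|a - t * p2| <= e * (t * K) -> `|p1 - p2| <= 2 * e * K.
Proof.
move=> t_gt0 h1 h2; rewrite -(ler_pM2l t_gt0) -(gtr0_norm t_gt0) -normrM mulrBr.
have -> : t * p1 - t * p2 = (a - t * p2) - (a - t * p1) by ring.
apply: le_trans (ler_normB _ _) _; rewrite gtr0_norm //.
by have := lerD h2 h1; rewrite -!mulrA (mulrCA t); lra.
Qed.

Lemma is_gradient_at_unique f x G1 G2 : density x ->
  is_gradient_at f x G1 -> is_gradient_at f x G2 ->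
  forall z, density z -> ipmx G1 (z - x) = ipmx G2 (z - x).
Proof.
move=> dx grad1 grad2 z dz; set K := mxnorm (z - x).
have K_ge0 : 0 <= K := mxnorm_ge0 _.
suff bound e : 0 < e -> `|ipmx G1 (z - x) - ipmx G2 (z - x)| <= 2 * e * K.
  apply/eqP; rewrite -subr_eq0 -normr_le0; apply/ler_addgt0Pr => e e_gt0.
  have K1_gt0 : 0 < 2 * K + 1 by lra.
  have e'_gt0 := divr_gt0 e_gt0 K1_gt0; apply: le_trans (bound _ e'_gt0) _.
  rewrite add0r -[leRHS](divfK (lt0r_neq0 K1_gt0)); move: e'_gt0; set e' := e / _; nra.
move=> e_gt0; have [d1 d1_gt0 near1] := grad1 e e_gt0.
have [d2 d2_gt0 near2] := grad2 e e_gt0.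
set t := Num.min 1 (Num.min d1 d2 / (K + 1)).
have t_gt0 : 0 < t by rewrite lt_min ltr01 divr_gt0 ?lt_min ?d1_gt0 //; lra.
have tK_lt : t * K < Num.min d1 d2.
  have : t * (K + 1) <= Num.min d1 d2 by rewrite -ler_pdivlMr ?ge_min ?lexx ?orbT //; lra.
  by nra.
set y := t%:C *: z + (1 - t)%:C *: x.
have dy : density y by apply: density_comb => //; rewrite ltW //= ge_min lexx.
have yx : y - x = t%:C *: (z - x).
  by rewrite /y rmorphB /= scalerBl scale1r scalerBr addrA addrAC addrK.
have ny : mxnorm (y - x) = t * K by rewrite yx mxnormZ gtr0_norm.
have := near1 y dy; have := near2 y dy; rewrite ny yx !ipmxZr => h2 h1.
apply: (ler_normB_of_approx t_gt0 (h1 _) (h2 _)); apply: (lt_le_trans tK_lt).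
  by rewrite ge_min lexx.
by rewrite ge_min lexx orbT.
Qed.

Section MonotoneOperator.
Variable F : M -> M.
Hypothesis F_cont : continuous_on_density F.
Hypothesis F_mono : forall x y, relint_density x -> relint_density y ->
  0 <= ipmx x (F x - F y).

Lemma fobj_gradient x : relint_density x -> is_gradient_at (fobj F) x (F x).
Proof.
move=> rx e e_gt0; have [d1 d1_gt0 near_relint] := relint_density_open rx.
set N : R := n%:R * n%:R; have N_ge0 : 0 <= N by rewrite mulr_ge0 ?ler0n.
have N1_gt0 : 0 < N + 1 by lra.
have [d2 d2_gt0 near_F] := F_cont (relint_densityW rx) (divr_gt0 e_gt0 N1_gt0).
exists (Num.min d1 d2) => [|y dy]; first by rewrite lt_min d1_gt0.
rewrite lt_min => /andP[yd1 yd2]; have ry := near_relint y dy yd1.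
have Fyx := near_F y dy yd2.
have rem_ge0 : 0 <= ipmx y (F y - F x) := F_mono ry rx.
have rem_le : ipmx y (F y - F x) <= ipmx (y - x) (F y - F x).
  by rewrite ipmxBl lerBrDl gerDr -oppr_ge0 -ipmxNr opprB F_mono.
rewrite fobj_remainder ger0_norm //; apply: (le_trans rem_le).
apply: le_trans (ler_norm _) _; apply: le_trans (ipmx_le_mxnorm _ _) _.
rewrite -/N mulrCA (mulrC e); apply: ler_wpM2l; first exact: mxnorm_ge0.
apply: le_trans (_ : N * (e / (N + 1)) <= e); first by rewrite ler_wpM2l // ltW.
by rewrite mulrA ler_pdivrMr // mulrDr mulr1 mulrC lerDl ltW.
Qed.

End MonotoneOperator.

End Gradient.

Section QuantumBlahutArimoto.
Variables (R : realType) (n : nat).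
Local Notation C := R[i].
Local Notation M := 'M[C]_n.
Implicit Types (x y z w B H : M).

Definition gibbs H : M := (\tr (expm H))^-1 *: expm H.

Lemma mxtrace1_dim_gt0 x : \tr x = 1 -> (0 < n)%N.
Proof.
move=> tx; rewrite lt0n; apply/eqP => n0; move: tx.
rewrite /mxtrace big1 => [/esym/eqP|i _]; first by rewrite oner_eq0.
by exfalso; case: i => k; rewrite n0.
Qed.

Section Gibbs.
Variable H : M.
Hypotheses (hH : H \is hermsymmx) (n_gt0 : (0 < n)%N).
Let P := spectralmx H.
Let Z := \sum_i expR (eigval H i).

Lemma partition_gt0 : 0 < Z.
Proof.
rewrite /Z (bigD1 (Ordinal n_gt0)) //= ltr_pwDl ?expR_gt0 ?sumr_ge0 //.
by move=> i _; apply: expR_ge0.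
Qed.

Lemma gibbs_udiag : gibbs H = udiag P (fun i => Z^-1 * expR (eigval H i)).
Proof.
by rewrite /gibbs /expm mxfunE mxtrace_udiag ?spectral_unitarymx // -fmorphV udiagZ.
Qed.

Lemma gibbs_relint : relint_density (gibbs H).
Proof.
have Z_gt0 := partition_gt0; have uP : P \is unitarymx := spectral_unitarymx H.
rewrite gibbs_udiag; split.
  by apply: pdmx_udiag => // i; rewrite mulr_gt0 ?invr_gt0 ?expR_gt0.
by rewrite mxtrace_udiag // -mulr_sumr mulVf ?gt_eqF.
Qed.

Lemma logm_gibbs : logm (gibbs H) = H - (ln Z)%:C *: 1%:M.
Proof.
have uP : P \is unitarymx := spectral_unitarymx H.
rewrite /logm (mxfun_udiag _ uP gibbs_udiag) [in RHS](spectral_udiag hH) -(udiag1 uP).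
rewrite udiagZ udiagB; congr udiag; apply: funext => i.
have Z_gt0 := partition_gt0.
by rewrite lnM ?posrE ?invr_gt0 ?expR_gt0 // lnV ?posrE // expRK; ring.
Qed.

End Gibbs.

Lemma bregman_negS_tilt w y z B (gamma s : R) : gamma != 0 ->
  \tr w = 1 -> \tr y = 1 ->
  logm z = logm y - (gamma^-1)%:C *: B - s%:C *: 1%:M ->
  ipmx B w + gamma * bregman_negS w y = gamma * relent w z - gamma * s.
Proof.
move=> g0 tw ty ez; have trwy : \tr (w - y) = 0 by rewrite raddfB /= tw ty subrr.
have -> : bregman_negS w y = relent w y by rewrite /bregman_negS trwy subr0.
rewrite !relentE ez !ipmxBr !ipmxZr ipmx1r tw (ipmxC B).
by rewrite /= mulr1; field.
Qed.

End QuantumBlahutArimoto.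

Section MirrorDescent.
Variables (R : realType) (n : nat).
Local Notation C := R[i].
Local Notation M := 'M[C]_n.
Implicit Types (x y z w : M).

Variables (F : M -> M) (gamma : R).
Hypotheses (gamma_gt0 : 0 < gamma) (F_cont : continuous_on_density F).
Hypothesis F_mono : forall x y, relint_density x -> relint_density y ->
  0 <= ipmx x (F x - F y).

Section Step.
Variable y : M.
Hypotheses (ry : relint_density y) (hFy : F y \is hermsymmx).
Let H := logm y - (gamma^-1)%:C *: F y.

Lemma qba_step_herm_exponent : H \is hermsymmx.
Proof. exact: hermsymmx_subZ (mxfun_herm _ _) hFy. Qed.

Lemma qba_stepE : qba_step F gamma y = gibbs H.
Proof. by []. Qed.

Lemma qba_step_relint : relint_density (qba_step F gamma y).
Proof. rewrite qba_stepE; exact: gibbs_relint (mxtrace1_dim_gt0 ry.2). Qed.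

Lemma qba_step_mirror_descent : mirror_descent_step (fobj F) gamma^-1 y (qba_step F gamma y).
Proof.
move=> G gradG; set z := qba_step F gamma y.
have rz : relint_density z := qba_step_relint.
have dy := relint_densityW ry.
have logz := logm_gibbs qba_step_herm_exponent (mxtrace1_dim_gt0 ry.2).
set s := ln _ in logz; rewrite -qba_stepE -/z /H in logz.
set K := ipmx G y - ipmx (F y) y - gamma * s.
have obj w : density w ->
    ipmx G w + gamma^-1^-1 * bregman_negS w y = gamma * relent w z + K.
  move=> dw; have := is_gradient_at_unique dy gradG (fobj_gradient F_cont F_mono ry) dw.
  have := bregman_negS_tilt (lt0r_neq0 gamma_gt0) dw.2 ry.2 logz.
  by rewrite invrK !ipmxBr (ipmxC (F y)) /K; lra.
have zz : relent z z = 0 by apply/relent_xx; case: rz => -[].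
have dz := relint_densityW rz.
split=> //; split=> w dw; rewrite !obj // zz mulr0 add0r.
  by rewrite lerDr mulr_ge0 ?(ltW gamma_gt0) ?(relent_ge0 dw rz).
by rewrite gerDr pmulr_rle0 // => /(relent_le0_eq dw rz).
Qed.

End Step.

End MirrorDescent.

Section RelativeConvexity.
Variables (R : realType) (n : nat).
Local Notation C := R[i].
Local Notation M := 'M[C]_n.
Implicit Types (x y : M) (F : M -> M).

Lemma convex_on_relint_gradient (g : M -> R) (G : M -> M) :
  (forall x y, relint_density x -> relint_density y -> ipmx (G x) (y - x) <= g y - g x) ->
  convex_on_relint g.
Proof.
move=> grad x y t rx ry t01; have /andP[t0 t1] := t01.
have rz := relint_density_comb t01 rx ry; set z := _ + _ in rz *.
have hx := grad z x rz rx; have hy := grad z y rz ry.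
have ez : ipmx (G z) z = t * ipmx (G z) x + (1 - t) * ipmx (G z) y by rewrite ipmxDr !ipmxZr.
rewrite !ipmxBr ez in hx hy; nra.
Qed.

Lemma rel_smooth_fobj F L :
  (forall x y, relint_density x -> relint_density y -> ipmx x (F x - F y) <= L * relent x y) ->
  rel_smooth L (fobj F).
Proof.
move=> FL; apply: (@convex_on_relint_gradient _ (fun x => L%:C *: logm x - F x)) => x y rx ry.
have := congr1 (fun r => L * r) (neg_entropy_remainder y rx.1.1).
have := fobj_remainder F x y; have := FL y x ry rx.
by rewrite ipmxBl ipmxZl /=; lra.
Qed.

Lemma rel_strongly_convex_fobj F a :
  (forall x y, relint_density x -> relint_density y -> a * relent x y <= ipmx x (F x - F y)) ->
  rel_strongly_convex a (fobj F).
Proof.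
move=> Fa; apply: (@convex_on_relint_gradient _ (fun x => F x - a%:C *: logm x)) => x y rx ry.
have := congr1 (fun r => a * r) (neg_entropy_remainder y rx.1.1).
have := fobj_remainder F x y; have := Fa y x ry rx.
by rewrite ipmxBl ipmxZl /=; lra.
Qed.

End RelativeConvexity.

Theorem mainTheorem4 (R : realType) (n : nat) (gamma : R)
    (F : 'M[R[i]]_n -> 'M[R[i]]_n) (x0 : 'M[R[i]]_n) :
  0 < gamma ->
  continuous_on_density F ->
  (forall x : 'M[R[i]]_n, density x -> F x \is hermsymmx) ->
  (forall x y : 'M[R[i]]_n, relint_density x -> relint_density y ->
     0 <= ipmx x (F x - F y) <= gamma * relent x y) ->
  relint_density x0 ->
  (* the QBA iterates are the mirror descent iterates with kernel -S, t_k = 1/gamma *)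
  (forall k : nat,
     relint_density (qba_iter F gamma x0 k) /\
     mirror_descent_step (fobj F) gamma^-1
       (qba_iter F gamma x0 k) (qba_iter F gamma x0 k.+1)) /\
  (* (a) *)
  (forall x : 'M[R[i]]_n, relint_density x ->
     is_gradient_at (fobj F) x (F x) /\ fobj F x = ipmx x (F x)) /\
  (* (b) *)
  rel_smooth gamma (fobj F) /\
  (* strong convexity *)
  (forall a : R, 0 < a ->
     (forall x y : 'M[R[i]]_n, relint_density x -> relint_density y ->
        a * relent x y <= ipmx x (F x - F y)) ->
     rel_strongly_convex a (fobj F)).
Proof.
move=> gamma_gt0 F_cont F_herm F_bounds rx0.
have F_mono x y : relint_density x -> relint_density y -> 0 <= ipmx x (F x - F y).
  by move=> rx ry; case/andP: (F_bounds x y rx ry).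
have hF x : relint_density x -> F x \is hermsymmx by move/relint_densityW/F_herm.
have iter_relint k : relint_density (qba_iter F gamma x0 k).
  by elim: k => // k IH; exact: qba_step_relint IH.
split=> [k|]; first by split; last exact: qba_step_mirror_descent (hF _ _).
split=> [x rx|]; first by split; first exact: fobj_gradient.
split; first by apply: rel_smooth_fobj => x y rx ry; case/andP: (F_bounds x y rx ry).
by move=> a _; apply: rel_strongly_convex_fobj.
Qed.
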